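(* If the TLFacP instance is non-degenerate, then for every $x\in S\cap\mathbb{R}^n$ the underlying undirected graph of the tangent digraph $\mathcal{G}(x)$ has no cycle.
   Context: $\mathbb{R}_{\max}=\mathbb{R}\cup\{-\infty\}$. Data: $A^\pm=(a^\pm_{i,j})\in\mathbb{R}_{\max}^{m\times n}$, $C=(c_{k,j})\in\mathbb{R}_{\max}^{p\times n}$; $A=(a_{i,j})$, $a_{i,j}=\max(a^+_{i,j},a^-_{i,j})$; $S=\{x:\max_j(a^+_{i,j}+x_j)\ge\max_j(a^-_{i,j}+x_j)\ \forall i\in[m]\}$. Tangent digraph $\mathcal{G}(x)$: vertices $U=\{u_1..u_p\}$, $V=[n]$, $W=\{w_1..w_m\}$; edges $E_1(x)=\{(u_k,j):\max_{j'}(c_{k,j'}+x_{j'})=c_{k,j}+x_j\}$, $E_2(x)=\{(w_i,j):\max_{j'}(a_{i,j'}+x_{j'})=a^-_{i,j}+x_j\}$, $E_3(x)=\{(j,w_i):\max_{j'}(a_{i,j'}+x_{j'})=a^+_{i,j}+x_j\}$. Non-degeneracy: let $Q\in\mathbb{R}_{\max}^{(p+m)\times n}$ be $C$ stacked above $A$; the tropical determinant of a square matrix $P$ is $\max_\sigma\sum_ip_{i,\sigma(i)}$ over permutations $\sigma$; $P$ is singular if at least two permutations attain the maximum; the instance is non-degenerate if no square submatrix of $Q$ with tropical determinant $\ne-\infty$ is singular. *)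

From HB Require Import structures.
From mathcomp Require Import all_boot all_order all_algebra fingroup perm.
From mathcomp Require Import reals.
Set Implicit Arguments.
Unset Strict Implicit.
Unset Printing Implicit Defensive.
Import Order.TTheory GRing.Theory Num.Theory.
Local Open Scope ring_scope.

(* R_max = R u {-oo}, represented as [option R] with [None] = -oo. *)
Section Tropical.
Variable R : realType.

Definition rmax := option R.

Definition tadd (a b : rmax) : rmax :=
  match a, b with
  | None, _ => b
  | _, None => a
  | Some x, Some y => Some (Num.max x y)
  end.

Definition tmul (a b : rmax) : rmax :=
  match a, b with
  | Some x, Some y => Some (x + y)
  | _, _ => None
  end.

Definition tle (a b : rmax) : bool :=
  match a, b with
  | None, _ => true
  | Some _, None => false
  | Some x, Some y => x <= y
  end.

Definition tsum (s : seq rmax) : rmax := foldr tadd None s.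
Definition tprod (s : seq rmax) : rmax := foldr tmul (Some 0) s.

Definition rowval {r n : nat} (M : 'M[rmax]_(r, n)) (i : 'I_r) (x : 'I_n -> R)
  : rmax := tsum [seq tmul (M i j) (Some (x j)) | j <- enum 'I_n].

Definition Amax {m n : nat} (Ap Am : 'M[rmax]_(m, n)) : 'M[rmax]_(m, n) :=
  \matrix_(i, j) tadd (Ap i j) (Am i j).

Definition inS {m n : nat} (Ap Am : 'M[rmax]_(m, n)) (x : 'I_n -> R) : Prop :=
  forall i : 'I_m, tle (rowval Am i x) (rowval Ap i x).

Definition perm_weight {k : nat} (P : 'M[rmax]_k) (s : 'S_k) : rmax :=
  tprod [seq P i (s i) | i <- enum 'I_k].
Definition tdet {k : nat} (P : 'M[rmax]_k) : rmax :=
  tsum [seq perm_weight P s | s <- enum [set: 'S_k]].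

Definition tsingular {k : nat} (P : 'M[rmax]_k) : Prop :=
  exists s1 s2 : 'S_k, s1 != s2 /\
    perm_weight P s1 = tdet P /\ perm_weight P s2 = tdet P.

Definition Qmat {p m n : nat} (C : 'M[rmax]_(p, n)) (Ap Am : 'M[rmax]_(m, n))
  : 'M[rmax]_(p + m, n) := col_mx C (Amax Ap Am).

(* A square k x k submatrix is given by injective row / column
   selections f, g (the order of rows/columns does not affect singularity). *)
Definition trop_nondegenerate {p m n : nat} (C : 'M[rmax]_(p, n))
  (Ap Am : 'M[rmax]_(m, n)) : Prop :=
  forall (k : nat) (f : 'I_k -> 'I_(p + m)) (g : 'I_k -> 'I_n),
    injective f -> injective g ->
    tdet (mxsub f g (Qmat C Ap Am)) <> None ->
    ~ tsingular (mxsub f g (Qmat C Ap Am)).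

(* Vertices of the tangent digraph:
   inl (inl k) = u_k (k < p), inl (inr j) = j in V = [n], inr i = w_i (i < m). *)
Definition tvert (p n m : nat) := ('I_p + 'I_n + 'I_m)%type.

Definition E1 {p n : nat} (C : 'M[rmax]_(p, n)) (x : 'I_n -> R) k j : bool :=
  (C k j != None) && (rowval C k x == tmul (C k j) (Some (x j))).
Definition E2 {m n : nat} (Ap Am : 'M[rmax]_(m, n)) (x : 'I_n -> R) i j : bool :=
  (Am i j != None) && (rowval (Amax Ap Am) i x == tmul (Am i j) (Some (x j))).
Definition E3 {m n : nat} (Ap Am : 'M[rmax]_(m, n)) (x : 'I_n -> R) j i : bool :=
  (Ap i j != None) && (rowval (Amax Ap Am) i x == tmul (Ap i j) (Some (x j))).

Definition tarc {p m n : nat} (C : 'M[rmax]_(p, n)) (Ap Am : 'M[rmax]_(m, n))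
  (x : 'I_n -> R) (a b : tvert p n m) : bool :=
  match a, b with
  | inl (inl k), inl (inr j) => E1 C x k j
  | inr i, inl (inr j) => E2 Ap Am x i j
  | inl (inr j), inr i => E3 Ap Am x j i
  | _, _ => false
  end.

Definition tadj {p m n : nat} (C : 'M[rmax]_(p, n)) (Ap Am : 'M[rmax]_(m, n))
  (x : 'I_n -> R) : rel (tvert p n m) :=
  fun a b => tarc C Ap Am x a b || tarc C Ap Am x b a.

Definition ug_acyclic {T : eqType} (e : rel T) : Prop :=
  ~ exists c : seq T, [/\ 3 <= size c, uniq c & path.cycle e c]%N.

End Tropical.

From HB Require Import structures.
From mathcomp Require Import all_boot all_order all_algebra fingroup perm.
From mathcomp Require Import reals zify.
Set Implicit Arguments.
Unset Strict Implicit.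
Unset Printing Implicit Defensive.
Import Order.TTheory GRing.Theory Num.Theory.

(* Write M_r = max_j (Q_rj + x_j) for the rows r of Q = [C; A] and call an entry
   tight when Q_rj + x_j = M_r.  Every arc of G(x) marks a tight entry of Q (for
   E2 and E3 because A^+, A^- <= A entrywise), so the undirected graph of G(x)
   embeds into the bipartite row/column graph of tight entries.  A cycle
   j_1 r_1 j_2 r_2 ... j_k r_k in that graph yields a k x k submatrix on which
   both the identity and the cyclic shift select only tight entries.  Every
   permutation of the submatrix weighs at most sum M_r - sum x_j and these two
   attain the bound, so its tropical determinant is finite and attained twice,
   which non-degeneracy forbids. *)

Lemma cycle_nth_edge (T : Type) (e : rel T) (x0 : T) (c : seq T) i :
  path.cycle e c -> i < size c -> e (nth x0 c i) (nth x0 c (i.+1 %% size c)).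
Proof.
rewrite (cycle_path x0) => /(pathP x0) edge ic.
have [iSc | ] := ltnP i.+1 (size c); first by rewrite modn_small //; apply: (edge i.+1).
move=> ciS; have iS : i.+1 = size c by apply/eqP; rewrite eqn_leq ic ciS.
by rewrite iS modnn; have := edge 0; rewrite /= -nth_last -iS /=; apply.
Qed.

Definition ordS_perm k : 'S_k := perm (@ordS_inj k).

Lemma ordS_permE k (t : 'I_k) : val (ordS_perm k t) = t.+1 %% k.
Proof. by rewrite permE. Qed.

Lemma ordS_perm_neq1 k : 1 < k -> ordS_perm k != 1%g.
Proof.
move=> k_gt1; have k_gt0 : 0 < k by apply: ltnW.
apply/eqP => /(congr1 (fun s : 'S_k => val (s (Ordinal k_gt0)))).
by rewrite ordS_permE perm1 /= modn_small.
Qed.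

Section BipartiteCycles.
Variables (A B : eqType) (adj : A -> B -> bool).

Definition bipartite_rel : rel (A + B) := fun u v =>
  match u, v with
  | inl a, inr b | inr b, inl a => adj a b
  | _, _ => false
  end.

Definition is_left (v : A + B) : bool := if v is inl _ then true else false.

Lemma bipartite_relC u v : bipartite_rel u v = bipartite_rel v u.
Proof. by case: u => ?; case: v => ?. Qed.

Lemma bipartite_rel_side u v : bipartite_rel u v -> is_left v = ~~ is_left u.
Proof. by case: u => ?; case: v => ?. Qed.

Lemma bipartite_cycle_parity x0 c : path.cycle bipartite_rel c ->
  (forall i, i < size c -> is_left (nth x0 c i) = is_left (nth x0 c 0) (+) odd i)
  /\ ~~ odd (size c).
Proof.
move=> cc; have side i : i < size c ->
    is_left (nth x0 c i) = is_left (nth x0 c 0) (+) odd i.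
  elim: i => [|i IHi] ic; first by rewrite addbF.
  have := cycle_nth_edge x0 cc (ltnW ic); rewrite modn_small //.
  by move/bipartite_rel_side ->; rewrite IHi ?(ltnW ic) //= addbN.
split=> //; case: (posnP (size c)) => [-> // | c_gt0].
have := @cycle_nth_edge _ _ x0 c (size c).-1 cc.
rewrite ltn_predL c_gt0 prednK // modnn => /(_ isT) /bipartite_rel_side.
rewrite (side (size c).-1) ?ltn_predL // -[in odd (size c)](prednK c_gt0) /=.
by case: (is_left _); case: (odd _).
Qed.

Lemma bipartite_cycle_matchings_from_right b0 (c : seq (A + B)) :
  nth (inr b0) c 0 = inr b0 -> uniq c -> 3 <= size c -> path.cycle bipartite_rel c ->
  exists k (f : 'I_k -> A) (g : 'I_k -> B) (s : 'S_k),
    [/\ injective f, injective g, s != 1%g,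
        forall t, adj (f t) (g t) & forall t, adj (f t) (g (s t))].
Proof.
move=> c_b0 uc c3 cc; pose a i := nth (inr b0) c i.
have edge i : i < size c -> bipartite_rel (a i) (a (i.+1 %% size c)).
  exact: cycle_nth_edge.
have [side even_c] := bipartite_cycle_parity (inr b0) cc.
rewrite c_b0 /= in side.
have [a0 _] : exists a0, a 1 = inl a0.
  by move: (side 1 (ltnW c3)); rewrite /a; case: (nth _ c 1) => [a0|//] _; exists a0.
pose left (v : A + B) := if v is inl a then a else a0.
pose right (v : A + B) := if v is inr b then b else b0.
have leftK i : i < size c -> odd i -> inl (left (a i)) = a i.
  by move=> ic; rewrite -side // /a; case: (nth _ _ _).
have rightK i : i < size c -> ~~ odd i -> inr (right (a i)) = a i.
  by move=> ic; rewrite -side // /a; case: (nth _ _ _).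
have a_inj i j : i < size c -> j < size c -> a i = a j -> i = j.
  by move=> ic jc /eqP; rewrite nth_uniq // => /eqP.
pose k := (size c)./2.
have c2k : size c = 2 * k by rewrite mul2n even_halfK.
have k_gt1 : 1 < k by lia.
have lt_even (t : 'I_k) : 2 * t < size c by have := ltn_ord t; lia.
have lt_odd (t : 'I_k) : (2 * t).+1 < size c by have := ltn_ord t; lia.
have odd_2t (t : nat) : odd (2 * t) = false by rewrite oddM.
exists k, (fun t => left (a (2 * t).+1)), (fun t => right (a (2 * t))), (ordS_perm k).
split=> [t1 t2 /= f12 | t1 t2 /= g12 | | t | t].
- have := congr1 (@inl A B) f12; rewrite !leftK ?lt_odd /= ?odd_2t //.
  by move=> /(a_inj _ _ (lt_odd t1) (lt_odd t2)) t12; apply: ord_inj; lia.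
- have := congr1 (@inr A B) g12; rewrite !rightK ?lt_even ?odd_2t //.
  by move=> /(a_inj _ _ (lt_even t1) (lt_even t2)) t12; apply: ord_inj; lia.
- exact: ordS_perm_neq1.
- have := edge _ (lt_even t); rewrite modn_small ?lt_odd //.
  by rewrite -(leftK _ (lt_odd t)) /= ?odd_2t // -(rightK _ (lt_even t)) ?odd_2t.
- have := edge _ (lt_odd t).
  have -> : (2 * t).+2 %% size c = 2 * ordS_perm k t.
    by rewrite ordS_permE muln_modr c2k; congr (_ %% _); lia.
  by rewrite -(leftK _ (lt_odd t)) /= ?odd_2t // -(rightK _ (lt_even _)) ?odd_2t.
Qed.

Lemma bipartite_cycle_matchings (c : seq (A + B)) :
  uniq c -> 3 <= size c -> path.cycle bipartite_rel c ->
  exists k (f : 'I_k -> A) (g : 'I_k -> B) (s : 'S_k),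
    [/\ injective f, injective g, s != 1%g,
        forall t, adj (f t) (g t) & forall t, adj (f t) (g (s t))].
Proof.
case: c => [//|[a0 c'|b0 c']]; last exact: bipartite_cycle_matchings_from_right.
case: c' => [//|[a1|b1] c''] uc c3 cc; first by move: cc => /andP[].
apply: (@bipartite_cycle_matchings_from_right b1 (rot 1 [:: inl a0, inr b1 & c'']));
  by rewrite ?rot_uniq ?size_rot ?rot_cycle ?rot1_cons.
Qed.

End BipartiteCycles.

Local Open Scope ring_scope.

Section TropicalOrder.
Variable R : realType.
Implicit Types (a b c : rmax R) (s : seq (rmax R)).

Lemma tle_refl a : tle a a.
Proof. by case: a => //= ?. Qed.

Lemma tle_trans b a c : tle a b -> tle b c -> tle a c.
Proof.
by case: a => [x|] //; case: b => [y|] //; case: c => [z|] //=; apply: le_trans.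
Qed.

Lemma tle_anti a b : tle a b -> tle b a -> a = b.
Proof.
by case: a => [x|]; case: b => [y|] //= ab ba; rewrite (@le_anti _ _ x y) ?ab ?ba.
Qed.

Lemma tle_addl a b : tle a (tadd a b).
Proof. by case: a => [x|]; case: b => [y|] //=; rewrite ?le_max lexx. Qed.

Lemma tle_addr a b : tle b (tadd a b).
Proof. by case: a => [x|]; case: b => [y|] //=; rewrite ?le_max lexx ?orbT. Qed.

Lemma tadd_le a b c : tle a c -> tle b c -> tle (tadd a b) c.
Proof.
by case: a => [x|]; case: b => [y|] //; case: c => [z|] //= ac bc; rewrite ge_max ac bc.
Qed.

Lemma tle_tsum a s : a \in s -> tle a (tsum s).
Proof.
elim: s => //= b s IHs; rewrite in_cons => /predU1P[-> | /IHs].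
  exact: tle_addl.
by move/tle_trans; apply; apply: tle_addr.
Qed.

Lemma tsum_le s c : {in s, forall a, tle a c} -> tle (tsum s) c.
Proof.
elim: s => [|b s IHs] sc /=; first by case: c {sc}.
apply: tadd_le; first by apply: sc; rewrite mem_head.
by apply: IHs => a as_; apply: sc; rewrite in_cons as_ orbT.
Qed.

Lemma tprod_map_le (I : Type) (F : I -> rmax R) (G : I -> R) (r : seq I) :
  (forall i, tle (F i) (Some (G i))) ->
  tle (tprod (map F r)) (Some (\sum_(i <- r) G i)).
Proof.
move=> FG; elim: r => [|i r IHr] /=; first by rewrite big_nil.
rewrite big_cons; move: (FG i) IHr; case: (F i) => [u|] //.
by case: (tprod _) => [v|] //=; apply: lerD.
Qed.

Lemma tprod_map_eq (I : Type) (F : I -> rmax R) (G : I -> R) (r : seq I) :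
  (forall i, F i = Some (G i)) ->
  tprod (map F r) = Some (\sum_(i <- r) G i).
Proof.
move=> FG; elim: r => [|i r IHr] /=; first by rewrite big_nil.
by rewrite big_cons FG IHr.
Qed.

End TropicalOrder.

Section TightEntries.
Variables (R : realType) (N n : nat) (Q : 'M[rmax R]_(N, n)) (x : 'I_n -> R).

(* The default [0] only matters for rows whose entries are all [-oo];
   such rows have no tight entries. *)
Definition row_max (r : 'I_N) : R := odflt 0 (rowval Q r x).

Definition tight (r : 'I_N) (j : 'I_n) : bool := Q r j == Some (row_max r - x j).

Lemma term_le_rowval r j : tle (tmul (Q r j) (Some (x j))) (rowval Q r x).
Proof. by apply: tle_tsum; apply: map_f; rewrite mem_enum. Qed.

Lemma term_le_row_max r j : tle (tmul (Q r j) (Some (x j))) (Some (row_max r)).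
Proof.
have := term_le_rowval r j; rewrite /row_max.
by case: (rowval Q r x) => [v|] //; case: (tmul _ _).
Qed.

Lemma tight_of_attained r j c : c != None -> tle c (Q r j) ->
  rowval Q r x = tmul c (Some (x j)) -> tight r j.
Proof.
case: c => [c|] // _ cQ attained; have := term_le_rowval r j.
rewrite /tight /row_max attained /= addrK.
case: (Q r j) cQ => [q|] //= cq; rewrite lerD2r => qc.
by apply/eqP; congr Some; apply/eqP; rewrite eq_le cq qc.
Qed.

Section Minor.
Variables (k : nat) (f : 'I_k -> 'I_N) (g : 'I_k -> 'I_n).
Let W := \sum_t row_max (f t) - \sum_t x (g t).

Lemma sum_row_max_perm (s : 'S_k) :
  \sum_(t <- enum 'I_k) (row_max (f t) - x (g (s t))) = W.
Proof.
rewrite big_enum /= sumrB; congr (_ - _).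
by rewrite [RHS](reindex_inj (@perm_inj _ s)).
Qed.

Lemma perm_weight_le (s : 'S_k) : tle (perm_weight (mxsub f g Q) s) (Some W).
Proof.
rewrite /perm_weight -(sum_row_max_perm s); apply: tprod_map_le => t.
rewrite mxE; have := term_le_row_max (f t) (g (s t)).
by case: (Q _ _) => [q|] //=; rewrite lerBrDr.
Qed.

Lemma perm_weight_tight (s : 'S_k) : (forall t, tight (f t) (g (s t))) ->
  perm_weight (mxsub f g Q) s = Some W.
Proof.
move=> tight_s; rewrite /perm_weight -(sum_row_max_perm s).
by apply: tprod_map_eq => t; rewrite mxE; apply/eqP/tight_s.
Qed.

Lemma tsingular_of_tight_perms (s1 s2 : 'S_k) : s1 != s2 ->
  (forall t, tight (f t) (g (s1 t))) -> (forall t, tight (f t) (g (s2 t))) ->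
  tdet (mxsub f g Q) <> None /\ tsingular (mxsub f g Q).
Proof.
move=> s12 tight1 tight2.
have tdetW : tdet (mxsub f g Q) = Some W.
  apply: tle_anti; first by apply: tsum_le => _ /mapP[s _ ->]; apply: perm_weight_le.
  rewrite -(perm_weight_tight tight1); apply/tle_tsum/map_f.
  by rewrite mem_enum in_setT.
split; first by rewrite tdetW.
by exists s1, s2; rewrite tdetW (perm_weight_tight tight1) (perm_weight_tight tight2).
Qed.

End Minor.
End TightEntries.

Section TangentGraph.
Variables (p m n : nat).

Definition tvert_side (v : tvert p n m) : 'I_(p + m) + 'I_n :=
  match v with
  | inl (inl k) => inl (lshift m k)
  | inl (inr j) => inr j
  | inr i => inl (rshift p i)
  end.

Lemma tvert_side_inj : injective tvert_side.
Proof.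
case=> [[k1|j1]|i1] [[k2|j2]|i2] //= []
  => [/ord_inj -> // | k12 | -> // | k12 | /addnI/ord_inj -> //].
  by have := ltn_ord k1; lia.
by have := ltn_ord k2; lia.
Qed.

Variables (R : realType) (x : 'I_n -> R).
Variables (C : 'M[rmax R]_(p, n)) (Ap Am : 'M[rmax R]_(m, n)).

Lemma rowval_col_mxu N1 N2 (M1 : 'M[rmax R]_(N1, n)) (M2 : 'M[rmax R]_(N2, n)) r :
  rowval (col_mx M1 M2) (lshift N2 r) x = rowval M1 r x.
Proof. by congr tsum; apply: eq_map => j; rewrite col_mxEu. Qed.

Lemma rowval_col_mxd N1 N2 (M1 : 'M[rmax R]_(N1, n)) (M2 : 'M[rmax R]_(N2, n)) r :
  rowval (col_mx M1 M2) (rshift N1 r) x = rowval M2 r x.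
Proof. by congr tsum; apply: eq_map => j; rewrite col_mxEd. Qed.

Lemma tarc_tight a b : tarc C Ap Am x a b ->
  bipartite_rel (tight (Qmat C Ap Am) x) (tvert_side a) (tvert_side b).
Proof.
case: a => [[k|j]|i]; case: b => [[k'|j']|i'] //= /andP[fin /eqP attained].
- apply: (tight_of_attained fin); first by rewrite col_mxEu tle_refl.
  by rewrite rowval_col_mxu.
- apply: (tight_of_attained fin); first by rewrite col_mxEd mxE tle_addl.
  by rewrite rowval_col_mxd.
- apply: (tight_of_attained fin); first by rewrite col_mxEd mxE tle_addr.
  by rewrite rowval_col_mxd.
Qed.

Lemma tadj_tight a b : tadj C Ap Am x a b ->
  bipartite_rel (tight (Qmat C Ap Am) x) (tvert_side a) (tvert_side b).
Proof. by case/orP => /tarc_tight //; rewrite bipartite_relC. Qed.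

End TangentGraph.

Lemma ug_acyclic_inj (T T' : eqType) (e : rel T) (e' : rel T') (h : T -> T') :
  injective h -> {homo h : a b / e a b >-> e' a b} -> ug_acyclic e' -> ug_acyclic e.
Proof.
move=> h_inj h_homo acyclic' [c [c3 uc cc]]; apply: acyclic'.
by exists (map h c); rewrite size_map map_inj_uniq // (homo_cycle h_homo).
Qed.

Definition tminors_nonsingular (R : realType) (N n : nat) (Q : 'M[rmax R]_(N, n)) :=
  forall k (f : 'I_k -> 'I_N) (g : 'I_k -> 'I_n), injective f -> injective g ->
    tdet (mxsub f g Q) <> None -> ~ tsingular (mxsub f g Q).

Lemma tight_graph_acyclic (R : realType) (N n : nat) (Q : 'M[rmax R]_(N, n)) x :
  tminors_nonsingular Q -> ug_acyclic (bipartite_rel (tight Q x)).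
Proof.
move=> nonsing [c [c3 uc cc]].
have [k [f [g [s [f_inj g_inj s_neq1 tight_id tight_s]]]]] :=
  bipartite_cycle_matchings uc c3 cc.
have tight_1 t : tight Q x (f t) (g ((1%g : 'S_k) t)) by rewrite perm1; apply: tight_id.
have [tdet_fin sing] := tsingular_of_tight_perms s_neq1 tight_s tight_1.
exact: (nonsing k f g f_inj g_inj tdet_fin).
Qed.

Theorem proposition5p1 (R : realType) (p m n : nat)
  (C : 'M[rmax R]_(p, n)) (Ap Am : 'M[rmax R]_(m, n)) :
  trop_nondegenerate C Ap Am ->
  forall x : 'I_n -> R, inS Ap Am x -> ug_acyclic (tadj C Ap Am x).
Proof.
move=> nondeg x _.
apply: (ug_acyclic_inj (@tvert_side_inj p m n) (@tadj_tight p m n R x C Ap Am)).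
exact: tight_graph_acyclic.
Qed.
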